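(* Let $k\ge1$ and $n$ be integers. Any two cycles of $G(n,k)$ are contiguous translates of each other: if $C_1,C_2$ are cycles of $G(n,k)$, then after possibly interchanging $C_1$ and $C_2$ there is an integer $d\ge0$ such that $C_2=C_1+d$ and $C_1+\alpha$ is a cycle of $G(n,k)$ for every integer $0\le\alpha\le d$. In particular, all cycles of $G(n,k)$ have the same length.
   Context: For an integer $\ell$, $\ell_k$ and $\ell_{k+1}$ denote the least nonnegative residues of $\ell$ modulo $k$ and $k+1$. $G(n,k)$ is the directed graph on vertices $0,1,\dots,k$ whose edges are exactly the $k$ edges $(i+n-2)_{k+1}\to(i+n-1)_k$, $1\le i\le k$; an edge $a\to a$ is a loop, counted as a cycle of length $1$. Every vertex other than $k$ and $(n-2)_{k+1}$ has in- and out-degree $1$, so $G(n,k)$ is a disjoint union of directed cycles together with one directed path (the tail) from $k$ to $(n-2)_{k+1}$. For a cycle $C: a_1\to\cdots\to a_\ell\to a_1$ and an integer $t$, $C+t$ denotes the closed walk $(a_1+t)_{k+1}\to\cdots\to(a_\ell+t)_{k+1}\to(a_1+t)_{k+1}$, and one says ''$C+t$ is a cycle'' when this is a cycle of $G(n,k)$. The length of a cycle is its number of edges. *)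

From mathcomp Require Import all_boot all_order all_algebra.
Set Implicit Arguments. Unset Strict Implicit. Unset Printing Implicit Defensive.
Import Order.TTheory GRing.Theory Num.Theory.
Local Open Scope ring_scope.

(* Vertices of G(n,k) are the integers 0..k (as ints); least nonnegative
   residues are computed with intdiv's modz. *)

Definition Gedge (n : int) (k : nat) (a b : int) : bool :=
  [exists j : 'I_k,
     (a == ((j.+1%:Z + n - 2) %% k.+1%:Z)%Z) &&
     (b == ((j.+1%:Z + n - 1) %% k%:Z)%Z)].

Definition is_Gcycle (n : int) (k : nat) (c : seq int) : Prop :=
  [/\ c != [::], uniq c & cycle (Gedge n k) c].

Definition cshift (k : nat) (t : int) (c : seq int) : seq int :=
  map (fun a => ((a + t) %% k.+1%:Z)%Z) c.

Definition same_cycle (c1 c2 : seq int) : Prop :=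
  exists r : nat, c2 = rot r c1.

From mathcomp Require Import all_boot all_order all_algebra zify.
Set Implicit Arguments. Unset Strict Implicit. Unset Printing Implicit Defensive.
Import Order.TTheory GRing.Theory Num.Theory.
Local Open Scope ring_scope.

(* Translation by [-1] maps edges of G(n,k) to edges, except the edge leaving
   v = (n-1)_{k+1} and the edges entering 0.  Hence a cycle avoiding 0 and v
   moves down to a cycle, and every cycle is a contiguous translate C0 + j of a
   "grounded" cycle C0, one through 0 or v.  Grounded cycles coincide: if A
   passes through 0 and misses v while another cycle passes through v, then the
   tail from k, which meets no cycle, first follows A - 1 down to k - 1 and
   then, once per turn of A, repeats itself moved down by 1.  So it never ends,
   yet it must reach its end (n-2)_{k+1}.  Comparing the two chains of
   translates of the common grounded cycle gives the theorem. *)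

Lemma eq_modz_near (x y m : int) :
  0 < m -> - m < x - y < m -> (x %% m)%Z = (y %% m)%Z -> x = y.
Proof.
move=> m_gt0 near exy; apply/eqP; rewrite -subr_eq0.
have diff : x - y = ((x %/ m)%Z - (y %/ m)%Z) * m.
  by rewrite {1}(divz_eq x m) {1}(divz_eq y m) exy mulrBl; lia.
rewrite diff in near *; set q := (_ - _)%R in near *.
by have [q_lt0|q_gt0|->] := ltrgtP q 0; [nia | nia | rewrite mul0r].
Qed.

Lemma modz_small_eq (x r q m : int) :
  0 < m -> 0 <= r < m -> x = r + q * m -> (x %% m)%Z = r.
Proof. by move=> m_gt0 r_small ->; rewrite addrC modzMDl modz_small. Qed.

Lemma traject_uniq_leq_period (T : eqType) (f : T -> T) (x : T) (m m' : nat) :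
  (0 < m)%N -> iter m f x = x -> uniq (traject f x m') -> (m' <= m)%N.
Proof.
move=> m_gt0 fix_x; rewrite leqNgt; apply: contraL => lt_m_m'.
have loop_x : looping f x m.
  by rewrite /looping fix_x; case: m m_gt0 {fix_x lt_m_m'} => // m _; exact: mem_head.
by rewrite -(subnKC lt_m_m') trajectD cat_uniq looping_uniq loop_x.
Qed.

Lemma same_cycle_sym (c1 c2 : seq int) :
  same_cycle c1 c2 -> same_cycle c2 c1.
Proof.
by case=> r ->; exists (size c1 - r)%N; rewrite -{1}(rotK r c1) /rotr size_rot.
Qed.

Lemma same_cycle_size (c1 c2 : seq int) : same_cycle c1 c2 -> size c1 = size c2.
Proof. by case=> r ->; rewrite size_rot. Qed.

Section Graph.

Variables (n : int) (k : nat).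
Hypothesis k_gt0 : (0 < k)%N.

Local Notation Gcycle := (is_Gcycle n k).

Definition vmod (x : int) : int := (x %% k.+1%:Z)%Z.

(* When [eidx a < k], the edge leaving [a] is the one with [i = eidx a + 1];
   the vertex of index [0] is [(n - 1)_(k+1)].  The only vertex with
   [eidx a = k] is the end [(n - 2)_(k+1)] of the tail, which has no outgoing
   edge, so [succ] is a junk value there. *)
Definition eidx (a : int) : int := vmod (a - (n - 1)).
Definition succ (a : int) : int := ((eidx a + n) %% k%:Z)%Z.

Lemma vmod_ge0_le x : 0 <= vmod x <= k%:Z.
Proof. rewrite /vmod; lia. Qed.

Lemma succ_ge0_lt x : 0 <= succ x < k%:Z.
Proof. rewrite /succ; lia. Qed.

Lemma vmod_id x : 0 <= x <= k%:Z -> vmod x = x.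
Proof. by move=> x_vertex; rewrite /vmod modz_small //; lia. Qed.

Lemma eidx_ge0_le x : 0 <= eidx x <= k%:Z.
Proof. exact: vmod_ge0_le. Qed.

Lemma vmodDml x y : vmod (vmod x + y) = vmod (x + y).
Proof. by rewrite /vmod modzDml. Qed.

Lemma GedgeP a b :
  Gedge n k a b <-> [/\ 0 <= a <= k%:Z, eidx a < k%:Z & b = succ a].
Proof.
split.
- case/existsP => j /andP [/eqP -> /eqP ->].
  have eidx_a : eidx (vmod (j.+1%:Z + n - 2)) = j%:Z.
    by rewrite /eidx vmodDml vmod_id; have := ltn_ord j; lia.
  split; first exact: vmod_ge0_le.
  + by rewrite eidx_a; have := ltn_ord j; lia.
  + by rewrite /succ eidx_a; congr (_ %% _)%Z; lia.
- case=> a_vertex a_out ->; apply/existsP.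
  have lt_i_k : (`|eidx a| < k)%N by have := eidx_ge0_le a; lia.
  exists (Ordinal lt_i_k); apply/andP; split; apply/eqP => /=.
  + have -> : `|eidx a|.+1%:Z + n - 2 = eidx a + (n - 1).
      by have := eidx_ge0_le a; lia.
    by rewrite /vmod modzDml subrK modz_small //; have := eidx_ge0_le a; lia.
  + by rewrite /succ; congr (_ %% _)%Z; have := eidx_ge0_le a; lia.
Qed.

Lemma eidx_inj a b :
  0 <= a <= k%:Z -> 0 <= b <= k%:Z -> eidx a = eidx b -> a = b.
Proof.
move=> a_vertex b_vertex /(eq_modz_near _ _) eq_ab.
suff: a - (n - 1) = b - (n - 1) by lia.
by apply: eq_ab; lia.
Qed.

Lemma succ_inj a b : 0 <= a <= k%:Z -> 0 <= b <= k%:Z ->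
  eidx a < k%:Z -> eidx b < k%:Z -> succ a = succ b -> a = b.
Proof.
move=> a_vertex b_vertex a_out b_out /(eq_modz_near _ _) eq_ab.
apply: eidx_inj => //.
have ea := eidx_ge0_le a; have eb := eidx_ge0_le b.
suff: eidx a + n = eidx b + n by lia.
by apply: eq_ab; lia.
Qed.

Lemma eidx_pred x : eidx (vmod (x - 1)) = vmod (eidx x - 1).
Proof. by rewrite /eidx /vmod !modzDml; congr (_ %% _)%Z; lia. Qed.

Lemma eidx_pred_lt x : eidx x != 0 -> eidx (vmod (x - 1)) < k%:Z.
Proof. by move=> x_idx; rewrite eidx_pred vmod_id; have := eidx_ge0_le x; lia. Qed.

Lemma succ_pred x : eidx x != 0 -> eidx x < k%:Z ->
  succ (vmod (x - 1)) = ((succ x - 1) %% k%:Z)%Z.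
Proof.
move=> x_idx0 x_out; have ex := eidx_ge0_le x.
rewrite /succ eidx_pred vmod_id; last lia.
by rewrite modzDml; congr (_ %% _)%Z; lia.
Qed.

Lemma Gcycle_mem C x : Gcycle C -> x \in C ->
  [/\ 0 <= x < k%:Z, eidx x < k%:Z, succ x \in C & next C x = succ x].
Proof.
case=> _ _ cycC xC.
have /GedgeP [_ x_out next_x] := next_cycle cycC xC.
have /GedgeP [_ _ prev_x] := prev_cycle cycC xC.
have x_lt := succ_ge0_lt (prev C x); rewrite -prev_x in x_lt.
by split => //; rewrite -next_x mem_next.
Qed.

Lemma Gcycle_vertex C x : Gcycle C -> x \in C -> 0 <= x <= k%:Z.
Proof. by move=> cycC /(Gcycle_mem cycC) [x_lt _ _ _]; lia. Qed.

Lemma Gcycle_size_gt0 C : Gcycle C -> (0 < size C)%N.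
Proof. by case; rewrite lt0n size_eq0. Qed.

Lemma Gcycle_rot C r : Gcycle (rot r C) <-> Gcycle C.
Proof. by rewrite /is_Gcycle rot_uniq rot_cycle -!size_eq0 size_rot. Qed.

Lemma Gcycle_traject C x : Gcycle C -> x \in C ->
  exists i, rot i C = traject succ x (size C) /\ iter (size C) succ x = x.
Proof.
move=> cycC xC; case: (rot_to xC) => i c rotC; exists i.
have [_ _] : Gcycle (rot i C) by apply/Gcycle_rot.
rewrite rotC /= rcons_path => /andP [pc lc].
have fpc : fpath succ x c.
  by apply: sub_path pc => a b /GedgeP [_ _ ->] /=.
have size_C : size C = (size c).+1 by rewrite -(size_rot i) rotC.
rewrite size_C /=; split; first by rewrite {1}(fpathE fpc).
have <- : last x c = iter (size c) succ x by rewrite {1}(fpathE fpc) last_traject.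
by case/GedgeP: lc.
Qed.

Lemma Gcycle_same_cycle C D x : Gcycle C -> Gcycle D -> x \in C -> x \in D ->
  same_cycle C D.
Proof.
move=> cycC cycD xC xD.
case: (Gcycle_traject cycC xC) => i [rotC iterC].
case: (Gcycle_traject cycD xD) => j [rotD iterD].
have uC : uniq (traject succ x (size C)) by rewrite -rotC rot_uniq; case: cycC.
have uD : uniq (traject succ x (size D)) by rewrite -rotD rot_uniq; case: cycD.
have size_CD : size C = size D.
  apply/eqP; rewrite eqn_leq.
  rewrite (traject_uniq_leq_period (Gcycle_size_gt0 cycD) iterD uC).
  by rewrite (traject_uniq_leq_period (Gcycle_size_gt0 cycC) iterC uD).
exists (rot_add C i (size (rot j D) - j)).
by rewrite -rot_rot_add rotC size_CD -rotD; exact: (esym (rotK j D)).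
Qed.

Lemma cshiftD C a b : cshift k a (cshift k b C) = cshift k (b + a) C.
Proof. by rewrite /cshift -map_comp; apply: eq_map => x /=; rewrite modzDml addrA. Qed.

Lemma cshift_rot C t r : cshift k t (rot r C) = rot r (cshift k t C).
Proof. exact: map_rot. Qed.

Lemma cshift0_Gcycle C : Gcycle C -> cshift k 0 C = C.
Proof.
move=> cycC; rewrite /cshift -[RHS]map_id; apply/eq_in_map => x xC /=.
have x_vertex := Gcycle_vertex cycC xC.
by rewrite addr0 modz_small //; lia.
Qed.

Lemma Gcycle_shift_down C : Gcycle C ->
    (forall x, x \in C -> x != 0 /\ eidx x != 0) ->
  Gcycle (cshift k (-1) C).
Proof.
move=> cycC avoid; have [C_nil uC cC] := cycC; split.
- by rewrite -size_eq0 size_map size_eq0.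
- rewrite map_inj_in_uniq // => x y xC yC /= exy.
  have x_vertex := Gcycle_vertex cycC xC; have y_vertex := Gcycle_vertex cycC yC.
  suff : x + -1 = y + -1 by lia.
  by apply: (@eq_modz_near _ _ k.+1%:Z) => //; lia.
- rewrite cycle_map; apply: (sub_in_cycle (P := mem C)) cC; last exact/allP.
  move=> x _ xC _ /GedgeP [x_vertex x_out ->] /=.
  have [x_neq0 x_idx0] := avoid x xC.
  have [_ _ /avoid[sx_neq0 _] _] := Gcycle_mem cycC xC.
  have ex := eidx_ge0_le x; have sx := succ_ge0_lt x.
  apply/GedgeP; rewrite -/(vmod (x - 1)) -/(vmod (succ x - 1)); split.
  + exact: vmod_ge0_le.
  + exact: eidx_pred_lt.
  + by rewrite succ_pred // modz_small ?vmod_id //; lia.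
Qed.

Lemma vmod_m1 : vmod (-1) = k%:Z.
Proof. by apply: (@modz_small_eq _ _ (-1)); lia. Qed.

Lemma eidx_sink : eidx (vmod (n - 2)) = k%:Z.
Proof. by rewrite /eidx vmodDml -vmod_m1; congr vmod; lia. Qed.

(* [tail i] is the [i]-th vertex of the walk from the source [k]; it is a
   genuine vertex of the tail path as long as [tail_defined i]. *)
Definition tail (i : nat) : int := iter i succ k%:Z.

Definition tail_defined (i : nat) : Prop :=
  forall j, (j < i)%N -> eidx (tail j) < k%:Z.

Lemma tail_definedW i j : (j <= i)%N -> tail_defined i -> tail_defined j.
Proof. by move=> le_ji def_i l lt_lj; apply/def_i/(leq_trans lt_lj). Qed.

Lemma tailS i : tail i.+1 = succ (tail i).
Proof. exact: iterS. Qed.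

Lemma tail_ge0_le i : 0 <= tail i <= k%:Z.
Proof.
case: i => [|i]; first by rewrite /tail /=; lia.
by rewrite tailS; have := succ_ge0_lt (tail i); lia.
Qed.

Lemma tail_notin_Gcycle C i : Gcycle C -> tail_defined i -> tail i \notin C.
Proof.
move=> cycC; elim: i => [|i IH] def_i.
  by apply/negP => /(Gcycle_mem cycC) [+ _ _ _]; rewrite /tail /=; lia.
apply/negP => tailC.
have prevC : prev C (tail i.+1) \in C by rewrite mem_prev.
have [prev_lt prev_out _ next_p] := Gcycle_mem cycC prevC.
have [_ uC _] := cycC; rewrite next_prev // in next_p.
have prev_tail : prev C (tail i.+1) = tail i.
  apply: succ_inj; [lia | exact: tail_ge0_le | exact: prev_out | exact: def_i |].
  by rewrite -tailS.
by have := IH (tail_definedW (leqnSn i) def_i); rewrite -prev_tail prevC.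
Qed.

Definition orbit0 (i : nat) : int := iter i succ 0.

Lemma orbit0S i : orbit0 i.+1 = succ (orbit0 i).
Proof. exact: iterS. Qed.

Section TailAvoidingIndexZero.

Variable A : seq int.
Hypotheses (cycA : Gcycle A) (A0 : 0 \in A) (A_idx : {in A, forall x, eidx x != 0}).
Hypothesis tail_idx : forall i, tail_defined i -> eidx (tail i) != 0.

Local Notation m := (size A).

Lemma orbit0_in i : orbit0 i \in A.
Proof. by elim: i => [|i IH] //; rewrite orbit0S; case: (Gcycle_mem cycA IH). Qed.

Lemma orbit0_size : orbit0 m = 0.
Proof. by case: (Gcycle_traject cycA A0) => i []. Qed.

Lemma orbit0_gt0 i : (0 < i < m)%N -> 0 < orbit0 i.
Proof.
case/andP=> i_gt0 lt_im; have /andP [orbit_ge0 _] := Gcycle_vertex cycA (orbit0_in i).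
rewrite lt0r orbit_ge0 andbT.
apply: contraTneq lt_im => orbit0_i; rewrite -leqNgt.
have [r [rotA _]] := Gcycle_traject cycA A0.
apply: (traject_uniq_leq_period i_gt0 orbit0_i).
by rewrite -rotA rot_uniq; case: cycA.
Qed.

Lemma tail_orbit0 i : (i < m)%N -> tail i = vmod (orbit0 i - 1).
Proof.
elim: i => [|i IH] lt_im.
  by rewrite /tail /= sub0r vmod_m1.
have [_ idx_lt _ _] := Gcycle_mem cycA (orbit0_in i).
rewrite tailS IH 1?ltnW // succ_pred ?A_idx ?orbit0_in // -orbit0S.
have [orbit_lt _ _ _] := Gcycle_mem cycA (orbit0_in i.+1).
have orbit_gt0 := @orbit0_gt0 i.+1 lt_im.
by rewrite modz_small ?vmod_id //; lia.
Qed.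

Lemma tail_size : tail m = k%:Z - 1.
Proof.
have [_ idx_lt _ _] := Gcycle_mem cycA (orbit0_in m.-1).
have m_gt0 := Gcycle_size_gt0 cycA.
rewrite -(prednK m_gt0) tailS tail_orbit0 ?ltn_predL //.
rewrite succ_pred ?A_idx ?orbit0_in // -orbit0S prednK // orbit0_size sub0r.
by apply: (@modz_small_eq _ _ (-1)); lia.
Qed.

Lemma tail_shift i : tail_defined i -> tail (m + i) = vmod (tail i - 1).
Proof.
elim: i => [|i IH] def_i.
  by rewrite addn0 tail_size [tail 0]/tail /= vmod_id; lia.
have def_i' := tail_definedW (leqnSn i) def_i.
rewrite addnS tailS IH // succ_pred ?(tail_idx def_i') ?(def_i _ (ltnSn i)) // -tailS.
have tail_gt0 : 0 < tail i.+1.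
  have /andP [tail_ge0 _] := tail_ge0_le i.+1; rewrite lt0r tail_ge0 andbT.
  by apply: contraNneq (tail_notin_Gcycle cycA def_i) => ->.
have tail_lt := succ_ge0_lt (tail i); rewrite -tailS in tail_lt.
by rewrite modz_small ?vmod_id //; lia.
Qed.

Lemma tail_defined_all {i} : tail_defined i.
Proof.
elim: i => [//|i IH] j; rewrite ltnS leq_eqVlt => /orP [/eqP -> | /IH //].
have [lt_im | le_mi] := ltnP i m.
  by rewrite tail_orbit0 //; apply/eidx_pred_lt/A_idx/orbit0_in.
have def_im : tail_defined (i - m) := tail_definedW (leq_subr m i) IH.
by rewrite -(subnKC le_mi) tail_shift //; apply/eidx_pred_lt/tail_idx.
Qed.

Lemma tail_mul_size t : tail (t * m) = vmod (k%:Z - t%:Z).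
Proof.
elim: t => [|t IH]; first by rewrite mul0n /tail /= vmod_id //; lia.
rewrite mulSn tail_shift ?IH ?vmodDml; last exact: tail_defined_all.
by congr vmod; lia.
Qed.

Lemma tail_avoiding_idx0_absurd : False.
Proof.
pose t := `|k%:Z - vmod (n - 2)|%N.
have := tail_defined_all (ltnSn (t * m)).
rewrite tail_mul_size (_ : vmod _ = vmod (n - 2)) ?eidx_sink; first by lia.
by rewrite vmod_id; have := vmod_ge0_le (n - 2); lia.
Qed.

End TailAvoidingIndexZero.

Lemma Gcycle0_idx0_mem A B y : Gcycle A -> 0 \in A ->
  Gcycle B -> y \in B -> eidx y = 0 -> y \in A.
Proof.
move=> cycA A0 cycB yB y_idx0; apply: contraT => yA; exfalso.
have eq_y x : 0 <= x <= k%:Z -> eidx x = 0 -> y = x.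
  by move=> x_vertex x_idx0; apply: eidx_inj (Gcycle_vertex cycB yB) x_vertex _; rewrite x_idx0.
apply: (tail_avoiding_idx0_absurd cycA A0).
- move=> x xA; apply: contraNneq yA => x_idx0.
  by rewrite (eq_y x) // (Gcycle_vertex cycA xA).
- move=> i def_i; apply: contraNneq (tail_notin_Gcycle cycB def_i) => tail_idx0.
  by rewrite -(eq_y _ (tail_ge0_le i) tail_idx0).
Qed.

Definition grounded (C : seq int) : Prop :=
  0 \in C \/ exists2 y, y \in C & eidx y = 0.

Lemma grounded_same_cycle C D :
  Gcycle C -> Gcycle D -> grounded C -> grounded D -> same_cycle C D.
Proof.
move=> cycC cycD [C0 | [x xC x_idx0]] [D0 | [y yD y_idx0]].
- exact: Gcycle_same_cycle cycC cycD C0 D0.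
- exact: Gcycle_same_cycle cycC cycD (Gcycle0_idx0_mem cycC C0 cycD yD y_idx0) yD.
- exact: Gcycle_same_cycle cycC cycD xC (Gcycle0_idx0_mem cycD D0 cycC xC x_idx0).
- have exy : x = y.
    by apply: eidx_inj (Gcycle_vertex cycC xC) (Gcycle_vertex cycD yD) _; rewrite x_idx0.
  by apply: Gcycle_same_cycle cycC cycD xC _; rewrite exy.
Qed.

(* Move the cycle down until it first becomes grounded. *)
Lemma Gcycle_descent C : Gcycle C -> exists j C0,
  [/\ Gcycle C0, grounded C0, C = cshift k j%:Z C0
    & forall al, (al <= j)%N -> Gcycle (cshift k al%:Z C0)].
Proof.
move=> cycC.
have [x0 x0C] : exists x, x \in C.
  by case: cycC; case: C => // x C' _; exists x; rewrite mem_head.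
pose grounded_at j :=
  has (fun x => (vmod (x - j%:Z) == 0) || (eidx (vmod (x - j%:Z)) == 0)) C.
have ex_grounded : exists j, grounded_at j.
  exists `|x0|%N; apply/hasP; exists x0 => //; apply/orP; left.
  have x0_vertex := Gcycle_vertex cycC x0C.
  by have -> : x0 - `|x0|%N%:Z = 0 by lia.
case: (ex_minnP ex_grounded) => j grounded_j min_j.
have down al : (al <= j)%N -> Gcycle (cshift k (- al%:Z) C).
  elim: al => [|al IH] le_al; first by rewrite oppr0 cshift0_Gcycle.
  have not_grounded : ~~ grounded_at al.
    by apply/negP => /min_j; rewrite leqNgt le_al.
  have -> : - al.+1%:Z = - al%:Z + -1 by lia.
  rewrite -cshiftD; apply: Gcycle_shift_down (IH (ltnW le_al)) _.
  move=> _ /mapP [x xC ->]; move: not_grounded.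
  rewrite /grounded_at -all_predC => /allP /(_ x xC) /=.
  by rewrite negb_or => /andP.
exists j, (cshift k (- j%:Z) C); split.
- exact: down.
- case/hasP: grounded_j => x xC /orP [] /eqP x_j; [left | right].
  + by apply/mapP; exists x; last exact/esym.
  + by exists (vmod (x - j%:Z)) => //; apply/mapP; exists x.
- by rewrite cshiftD addNr cshift0_Gcycle.
- move=> al le_al; rewrite cshiftD.
  have -> : - j%:Z + al%:Z = - (j - al)%N%:Z by lia.
  exact/down/leq_subr.
Qed.

Lemma cshift_chain C0 D0 j i : (j <= i)%N -> same_cycle C0 D0 ->
    (forall al, (al <= i)%N -> Gcycle (cshift k al%:Z D0)) ->
  same_cycle (cshift k (i - j)%N%:Z (cshift k j%:Z C0)) (cshift k i%:Z D0) /\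
  (forall al, (al <= i - j)%N -> Gcycle (cshift k al%:Z (cshift k j%:Z C0))).
Proof.
move=> le_ji [r ->] cyc_shifts; split.
  by exists r; rewrite cshift_rot cshiftD; congr (rot r (cshift k _ _)); lia.
move=> al le_al; rewrite cshiftD.
have /cyc_shifts : (j + al <= i)%N by rewrite -(subnKC le_ji) leq_add2l.
by rewrite cshift_rot => /Gcycle_rot; congr (Gcycle (cshift k _ _)); lia.
Qed.

End Graph.

Theorem theorem3p9 (n : int) (k : nat) (hk : (1 <= k)%N)
    (C1 C2 : seq int) :
  is_Gcycle n k C1 -> is_Gcycle n k C2 ->
  (exists (A B : seq int) (d : nat),
      ((A = C1 /\ B = C2) \/ (A = C2 /\ B = C1)) /\
      same_cycle (cshift k d%:Z A) B /\
      (forall alpha : nat, (alpha <= d)%N ->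
          is_Gcycle n k (cshift k alpha%:Z A)))
  /\ size C1 = size C2.
Proof.
move=> cyc1 cyc2.
have [j [C0 [cycC0 groundC0 -> shiftsC0]]] := Gcycle_descent hk cyc1.
have [i [D0 [cycD0 groundD0 -> shiftsD0]]] := Gcycle_descent hk cyc2.
have sameCD := grounded_same_cycle hk cycC0 cycD0 groundC0 groundD0.
have [le_ji | lt_ij] := leqP j i.
- have [same shifts] := cshift_chain hk le_ji sameCD shiftsD0.
  split; first by exists (cshift k j%:Z C0), (cshift k i%:Z D0), (i - j)%N; split; [left|].
  by rewrite -(same_cycle_size same) !size_map.
- have [same shifts] := cshift_chain hk (ltnW lt_ij) (same_cycle_sym sameCD) shiftsC0.
  split; first by exists (cshift k i%:Z D0), (cshift k j%:Z C0), (j - i)%N; split; [right|].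
  by rewrite -(same_cycle_size same) !size_map.
Qed.
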